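(* Let $(r_t)_{t\ge0}$ and $(\delta_t)_{t\ge0}$ be sequences of non-negative real numbers, and let $g>1$ and $N\ge0$. Suppose that $r_t\le g\,\delta_t-\delta_{t+1}+N$ for all $t\ge0$. Then for every $T\ge1$, $$\min_{0\le t\le T-1}r_t\le\frac{g^T}{T}\delta_0+N.$$ *)

From mathcomp Require Import all_boot all_order all_algebra.
Set Implicit Arguments. Unset Strict Implicit. Unset Printing Implicit Defensive.

(* Weight the recursion at time t by g^(T-1-t) and sum: the delta terms telescope to
   g^T delta_0 - delta_T, so min r * S <= g^T delta_0 + N * S with S = sum_(t < T) g^t.
   Since g >= 1 we have S >= T, which gives the bound after dividing by T. *)
From mathcomp Require Import all_boot all_order all_algebra.
From mathcomp Require Import lra.
Set Implicit Arguments. Unset Strict Implicit. Unset Printing Implicit Defensive.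
Import Order.TTheory GRing.Theory Num.Theory.
Local Open Scope ring_scope.

Lemma geometric_sumS (R : comPzRingType) (g : R) n :
  \sum_(i < n.+1) g ^+ i = g * \sum_(i < n) g ^+ i + 1.
Proof.
rewrite big_ord_recl expr0 mulr_sumr addrC; congr (_ + _).
by apply: eq_bigr => i _; rewrite exprS.
Qed.

Lemma geometric_sum_ge (R : realDomainType) (g : R) n :
  1 <= g -> n%:R <= \sum_(i < n) g ^+ i.
Proof.
move=> g_ge1; rewrite -[n in n%:R]card_ord -sumr_const.
by apply: ler_sum => i _; exact: exprn_ege1.
Qed.

Lemma discounted_telescoping_bound (R : realDomainType) (m g N : R)
    (delta : nat -> R) n :
  0 <= g -> (forall t, (t < n)%N -> m <= g * delta t - delta t.+1 + N) ->
  m * \sum_(i < n) g ^+ i + delta n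
    <= g ^+ n * delta 0%N + N * \sum_(i < n) g ^+ i.
Proof.
move=> g_ge0; elim: n => [|n IHn] hrec.
  by rewrite big_ord0 !mulr0 expr0 mul1r !addr0 add0r.
have IH : g * (m * \sum_(i < n) g ^+ i + delta n)
    <= g * (g ^+ n * delta 0%N + N * \sum_(i < n) g ^+ i).
  by apply: ler_wpM2l => //; apply: IHn => t /ltnW; exact: hrec.
have := hrec n (ltnSn n); rewrite geometric_sumS exprS; nra.
Qed.

Lemma le_div_add_of_mul_le (R : realFieldType) (m N c S T : R) :
  0 < T -> T <= S -> 0 <= c -> m * S <= c + N * S -> m <= c / T + N.
Proof.
move=> T_gt0 le_TS c_ge0 hmS.
have cT_ge0 : 0 <= c / T by exact: divr_ge0 (ltW T_gt0).
have [//|N_lt_m] := lerP m N; first lra.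
suff : m - N <= c / T by lra.
rewrite ler_pdivlMr //; have : (m - N) * T <= (m - N) * S.
  by rewrite ler_pM2l // subr_gt0.
lra.
Qed.

Theorem lemmaA8 (R : realFieldType) (r delta : nat -> R) (g N : R)
  (hr : forall t, 0 <= r t) (hd : forall t, 0 <= delta t)
  (hg : 1 < g) (hN : 0 <= N)
  (hrec : forall t, r t <= g * delta t - delta t.+1 + N)
  (T : nat) (hT : (1 <= T)%N) :
  \big[Num.min/r 0%N]_(t < T) r t <= g ^+ T / T%:R * delta 0%N + N.
Proof.
set m := \big[Num.min/r 0%N]_(t < T) r t.
have m_le t : (t < T)%N -> m <= g * delta t - delta t.+1 + N.
  by move=> ltT; apply: le_trans (hrec t); exact: (bigmin_le _ (Ordinal ltT)).
have g_ge1 : 1 <= g by exact: ltW.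
have bound := discounted_telescoping_bound (le_trans ler01 g_ge1) m_le.
rewrite mulrAC; apply: (le_div_add_of_mul_le (S := \sum_(i < T) g ^+ i)).
- by rewrite ltr0n.
- exact: geometric_sum_ge.
- by rewrite mulr_ge0 ?exprn_ge0 // (le_trans ler01 g_ge1).
- by have := hd T; lra.
Qed.
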